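(* Let $0<a<1$, $u=a^{-1}+\sqrt{a^{-2}-1}$, and $\alpha_n=-\frac{u-u^{-1}}{u^{n+2}-u^{-n-2}}$ for $n\ge0$. Then for nonnegative integers $n,r,s$, \[ \mu_{n,r,s}=\begin{cases}1&\text{if } s=n+r,\\[2pt] -\dfrac{(u^n-u^{-n})(u-u^{-1})}{(u^{s+2}-u^{-(s+2)})(u^{r+1}-u^{-(r+1)})}&\text{if } n-1\le s<n+r,\\[2pt] 0&\text{otherwise.}\end{cases} \]
   Context: For a polynomial $f(z)=\sum_{k=0}^n a_kz^k$ of degree $n$, write $\overline{f}(z)=\sum_k\overline{a_k}z^k$ and $f^*(z)=z^n\overline{f}(1/z)$. Given $(\alpha_n)$ with $|\alpha_n|<1$, define monic $\Phi_n$ by $\Phi_0=1$, $\Phi_{n+1}(z)=z\Phi_n(z)-\overline{\alpha_n}\Phi_n^*(z)$. Let $\mathcal{L}$ be the unique linear functional on Laurent polynomials with $\mathcal{L}(1)=1$ and $\mathcal{L}(\Phi_m(z)\overline{\Phi_n}(1/z))=0$ for $m\neq n$; set $\langle f,g\rangle=\mathcal{L}(f(z)\overline{g}(1/z))$ and $\mu_{n,r,s}=\langle\Phi_s(z),z^n\Phi_r(z)\rangle/\langle\Phi_s,\Phi_s\rangle$. *)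

From HB Require Import structures.
From mathcomp Require Import all_boot all_order all_algebra.
Set Implicit Arguments. Unset Strict Implicit. Unset Printing Implicit Defensive.
Import Order.TTheory GRing.Theory Num.Theory.
Local Open Scope ring_scope.

Section OPUC.
Variable C : numClosedFieldType.

(* f^*(z) = z^n \bar f(1/z), n = deg f *)
Definition polystar (p : {poly C}) : {poly C} :=
  let n := (size p).-1 in \poly_(i < n.+1) (p`_(n - i))^*.

Fixpoint Phi (alpha : nat -> C) (n : nat) : {poly C} :=
  match n with
  | 0 => 1
  | n'.+1 => 'X * Phi alpha n' - (alpha n')^* *: polystar (Phi alpha n')
  end.

(* A linear functional L on Laurent polynomials is given by its moments
   c k = L(z^k), k : int.  Then  <f,g> = L(f(z) \bar g(1/z))
   = sum_{i,j} f_i conj(g_j) c(i - j). *)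
Definition lform (c : int -> C) (f g : {poly C}) : C :=
  \sum_(i < size f) \sum_(j < size g) f`_i * (g`_j)^* * c (i%:Z - j%:Z).

Definition is_OPUC_functional (alpha : nat -> C) (c : int -> C) : Prop :=
  c 0 = 1 /\ forall m n : nat, m <> n -> lform c (Phi alpha m) (Phi alpha n) = 0.

Definition mu (alpha : nat -> C) (c : int -> C) (n r s : nat) : C :=
  lform c (Phi alpha s) ('X^n * Phi alpha r) / lform c (Phi alpha s) (Phi alpha s).

End OPUC.

(* Write s_k = u^k - u^-k.  The addition formula
   s_k s_(k+m+1) + s_1 s_m = s_(k+1) s_(k+m)
   shows that the Szego recursion is solved by Phi_n = sum_(i<=n) s_(i+1)/s_(n+1) z^i.
   Orthogonality of Phi_m (m > 0) to Phi_0 = 1, on either side, then forces the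
   moments L(1) = 1, L(z^1) = L(z^-1) = alpha_0 = -s_1/s_2 and L(z^k) = 0 for |k| >= 2.
   Against this tridiagonal functional the coefficients of Phi_s satisfy the
   recurrence s_(k+1) + alpha_0 (s_(k+2) + s_k) = 0 except at the top, so <Phi_s, g>
   only involves g_s and g_(s+1).  For g = z^n Phi_r this gives mu as a combination
   of two coefficients of z^n Phi_r, simplified by the addition formula again.
   The hypothesis on a is only used through u > 1. *)

From HB Require Import structures.
From mathcomp Require Import all_boot all_order all_algebra.
From mathcomp Require Import ring zify.
Import Order.TTheory GRing.Theory Num.Theory.
Local Open Scope ring_scope.

Section LinearFunctional.
Context {C : numClosedFieldType}.
Implicit Types (c : int -> C) (f g : {poly C}).

Lemma sum_coef_delta f (k : nat) : \sum_(i < size f) f`_i * (i == k :> nat)%:R = f`_k.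
Proof.
under eq_bigr => i _ do rewrite mulr_natr mulrb.
rewrite -big_mkcond big_ord1_eq; case: ltnP => // le_f_k.
by rewrite nth_default.
Qed.

Lemma lformE c f g :
  lform c f g = \sum_(j < size g) (g`_j)^* * \sum_(i < size f) f`_i * c (i%:Z - j%:Z).
Proof.
rewrite /lform exchange_big; apply: eq_bigr => j _; rewrite mulr_sumr.
by apply: eq_bigr => i _; rewrite mulrCA mulrA.
Qed.

Lemma lform_tridiag {b : C} {c} :
  (forall k : int, c k = (k == 0)%:R + b * ((k == 1)%:R + (k == -1)%:R)) ->
  forall f g, lform c f g =
    \sum_(j < size g) (g`_j)^* * (f`_j + b * (f`_j.+1 + ('X * f)`_j)).
Proof.
move=> cE f g; rewrite lformE; apply: eq_bigr => j _; congr (_ * _).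
under eq_bigr => i _.
  rewrite cE (_ : (i%:Z - j%:Z == 0) = (i == j :> nat)); last by apply/eqP/eqP; lia.
  rewrite (_ : (i%:Z - j%:Z == 1) = (i == j.+1 :> nat)); last by apply/eqP/eqP; lia.
  rewrite (_ : (i%:Z - j%:Z == -1) = (i.+1 == j :> nat)); last by apply/eqP/eqP; lia.
  rewrite !mulrDr mulrCA (mulrCA _ b).
  over.
rewrite big_split big_split /= -!mulr_sumr !sum_coef_delta coefXM.
rewrite mulrDr; case: j => [[|j] _] /=.
  by rewrite big1 ?mulr0 // => i _; rewrite mulr0.
by under eq_bigr => i _ do rewrite eqSS; rewrite sum_coef_delta.
Qed.

Lemma sum_conj_coef_delta g (k : nat) (x : C) :
  \sum_(j < size g) (g`_j)^* * (x * (j == k :> nat)%:R) = (g`_k)^* * x.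
Proof.
under eq_bigr => j _ do rewrite mulrA mulr_natr mulrb.
rewrite -big_mkcond (big_ord1_eq _ (fun j => (g`_j)^* * x)); case: ltnP => // le_g_k.
by rewrite nth_default ?conjC0 ?mul0r.
Qed.

Lemma lform_f1 c f : lform c f 1 = \sum_(i < size f) f`_i * c i%:Z.
Proof.
rewrite lformE size_poly1 big_ord1 coef1 conjC1 mul1r.
by apply: eq_bigr => i _; rewrite subr0.
Qed.

Lemma lform_1g c g : lform c 1 g = \sum_(j < size g) (g`_j)^* * c (- j%:Z).
Proof.
rewrite lformE; apply: eq_bigr => j _.
by rewrite size_poly1 big_ord1 coef1 mul1r sub0r.
Qed.

End LinearFunctional.

Section ExplicitSolution.
Variable C : numClosedFieldType.
Variable u : C.
Hypothesis u_gt1 : 1 < u.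

Definition sh (k : nat) : C := u ^+ k - u ^- k.

Lemma u_gt0 : 0 < u. Proof. exact: lt_trans ltr01 u_gt1. Qed.

Lemma sh0 : sh 0 = 0. Proof. by rewrite /sh expr0 invr1 subrr. Qed.

Lemma sh_gt0 k : (0 < k)%N -> 0 < sh k.
Proof.
move=> k_gt0; have uk_gt1 : 1 < u ^+ k by rewrite exprn_egt1 // -lt0n.
rewrite /sh subr_gt0 (lt_trans _ uk_gt1) // invf_lt1 //.
exact: lt_trans ltr01 uk_gt1.
Qed.

Lemma sh_neq0 k : (0 < k)%N -> sh k != 0.
Proof. by move/sh_gt0; rewrite lt0r => /andP[]. Qed.

Lemma sh_real k : sh k \is Num.real.
Proof. by rewrite rpredB ?rpredV ?rpredX // gtr0_real // u_gt0. Qed.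

Lemma conj_sh_ratio k l : (sh k / sh l)^* = sh k / sh l.
Proof. by apply: conj_Creal; rewrite rpredM ?rpredV ?sh_real. Qed.

Lemma sh_cross k m : sh k * sh (k + m).+1 + sh 1 * sh m = sh k.+1 * sh (k + m).
Proof.
have u_neq0 : u != 0 by rewrite gt_eqF // u_gt0.
rewrite /sh !exprS !exprD expr0.
by field; rewrite !expf_neq0.
Qed.

Lemma sh_cross_ratio k n :
  sh k - sh (k + n) / sh (k + n).+1 * sh k.+1 = - (sh n * sh 1) / sh (k + n).+1.
Proof.
have sh_kn1_neq0 : sh (k + n).+1 != 0 by rewrite sh_neq0.
apply: (mulIf sh_kn1_neq0); rewrite mulrBl mulrAC !divfK //.
by rewrite (mulrC (sh (k + n))) -sh_cross; ring.
Qed.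

Definition phi (n : nat) : {poly C} := \poly_(i < n.+1) (sh i.+1 / sh n.+1).

Definition alpha (n : nat) : C := - sh 1 / sh n.+2.

Lemma coef_phi n k : (phi n)`_k = if (k <= n)%N then sh k.+1 / sh n.+1 else 0.
Proof. by rewrite coef_poly ltnS. Qed.

Lemma size_phi n : size (phi n) = n.+1.
Proof. by rewrite size_poly_eq // divff ?oner_eq0 ?sh_neq0. Qed.

Lemma phi0 : phi 0 = 1.
Proof. by apply/polyP => -[|k]; rewrite coef_phi coef1 //= divff ?sh_neq0. Qed.

Lemma X_phi n : 'X * phi n = \poly_(i < n.+2) (sh i / sh n.+1).
Proof.
apply/polyP => -[|k]; rewrite coefXM coef_poly //= ?sh0 ?mul0r //.
by rewrite coef_phi.
Qed.

Lemma polystar_phi n : polystar (phi n) = \poly_(i < n.+2) (sh (n.+1 - i) / sh n.+1).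
Proof.
apply/polyP => k; rewrite /polystar size_phi /= !coef_poly !ltnS leq_subr conj_sh_ratio.
case: (ltngtP k n.+1) => [lt_k_n1|lt_n1_k|->].
- by rewrite -ltnS lt_k_n1 subSn.
- by rewrite leqNgt (ltnW lt_n1_k).
- by rewrite ltnn subnn sh0 mul0r.
Qed.

Lemma conj_alpha n : (alpha n)^* = alpha n.
Proof. by apply: conj_Creal; rewrite rpredM ?rpredN ?rpredV ?sh_real. Qed.

Lemma PhiE n : Phi alpha n = phi n.
Proof.
elim: n => [|n IHn] //=; first by rewrite phi0.
rewrite IHn X_phi polystar_phi conj_alpha; apply/polyP => i.
rewrite coefB coefZ !coef_poly; case: ltnP => [lt_i_n2|_]; last by rewrite mulr0 subr0.
have [m n1E] : exists m, n.+1 = (i + m)%N by exists (n.+1 - i)%N; rewrite subnKC.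
rewrite /alpha n1E addKn.
have sh_im_neq0 : sh (i + m) != 0 by rewrite sh_neq0 // -n1E.
have -> : sh i.+1 = (sh i * sh (i + m).+1 + sh 1 * sh m) / sh (i + m).
  by rewrite sh_cross mulfK.
by field; rewrite sh_im_neq0 sh_neq0.
Qed.

Lemma conj_coef_phi n k : ((phi n)`_k)^* = (phi n)`_k.
Proof. by rewrite coef_phi; case: ifP; rewrite ?conj_sh_ratio ?conjC0. Qed.

Lemma sh_recurrence k : sh k.+1 + alpha 0 * (sh k.+2 + sh k) = 0.
Proof.
have sh2_neq0 : sh 2 != 0 by rewrite sh_neq0.
have := sh_cross 1 k; rewrite add1n -mulrDr => sh_cross1k.
by rewrite /alpha mulrAC !mulNr sh_cross1k mulrAC divff // mul1r subrr.
Qed.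

Lemma phi_moments (d : nat -> C) :
  (forall m, (0 < m)%N -> \sum_(i < m.+1) (phi m)`_i * d i = 0) ->
  d 1%N = alpha 0 * d 0%N /\ forall m, d m.+2 = 0.
Proof.
move=> d_orth.
have sum_sh m : (0 < m)%N -> \sum_(i < m.+1) sh i.+1 * d i = 0.
  move=> m_gt0; move: (d_orth m m_gt0).
  under eq_bigr => i _ do rewrite coef_phi -ltnS ltn_ord mulrAC.
  move/eqP; rewrite -mulr_suml mulf_eq0 invr_eq0 (negbTE (sh_neq0 _ _)) // orbF.
  by move/eqP.
split.
  have := sum_sh 1%N isT; rewrite !big_ord_recr big_ord0 /= add0r => /eqP.
  rewrite addr_eq0 => /eqP sh2_d1.
  by rewrite /alpha mulrAC mulNr sh2_d1 opprK mulrAC divff ?mul1r ?sh_neq0.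
move=> m; have := sum_sh m.+2 isT; rewrite big_ord_recr /= sum_sh // add0r => /eqP.
by rewrite mulf_eq0 (negbTE (sh_neq0 _ _)) //= => /eqP.
Qed.

Variable c : int -> C.
Hypothesis c_OPUC : is_OPUC_functional alpha c.

Lemma c_tridiag (k : int) :
  c k = (k == 0)%:R + alpha 0 * ((k == 1)%:R + (k == -1)%:R).
Proof.
have [c0 orth] := c_OPUC.
have orth_pos m : (0 < m)%N -> \sum_(i < m.+1) (phi m)`_i * c i%:Z = 0.
  move=> m_gt0; rewrite -size_phi -lform_f1 -phi0 -!PhiE.
  by apply: orth => m0; rewrite m0 in m_gt0.
have orth_neg m : (0 < m)%N -> \sum_(i < m.+1) (phi m)`_i * c (- i%:Z) = 0.
  move=> m_gt0; rewrite -size_phi.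
  under eq_bigr => i _ do rewrite -conj_coef_phi.
  rewrite -lform_1g -phi0 -!PhiE.
  by apply: orth => m0; rewrite -m0 in m_gt0.
have [/= c1E c_pos] := @phi_moments (fun i => c i%:Z) orth_pos.
have [/= cN1E c_neg] := @phi_moments (fun i => c (- i%:Z)) orth_neg.
rewrite c0 mulr1 in c1E; rewrite oppr0 c0 mulr1 in cN1E.
case: k => [[|[|m]]|[|m]] /=;
  by rewrite ?c0 ?c1E ?c_pos ?cN1E ?(c_neg m); ring.
Qed.

Lemma phi_tridiag s j :
  (phi s)`_j + alpha 0 * ((phi s)`_j.+1 + ('X * phi s)`_j) =
    alpha 0 * (j == s.+1)%:R + (- (alpha 0 * sh s.+2 / sh s.+1)) * (j == s)%:R.
Proof.
rewrite X_phi coef_poly !coef_phi.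
case: (ltngtP j s) => [lt_js|lt_sj|->].
- rewrite ifT ?(ltn_eqF (ltn_trans lt_js (ltnSn s))); last exact: leqW (leqW lt_js).
  rewrite /= !mulr0 addr0 -mulrDl mulrA -mulrDl.
  by rewrite sh_recurrence mul0r.
- case: (eqVneq j s.+1) => [->|ne_js1].
    by rewrite ifT //= !add0r divff ?sh_neq0 // mulr0 addr0.
  rewrite ifF /= ?add0r ?mulr0 ?addr0 //.
  by rewrite ltnS leqNgt ltn_neqAle eq_sym ne_js1 lt_sj.
- rewrite ifT // (ltn_eqF (ltnSn s)) /= mulr0 mulr1 add0r divff ?sh_neq0 //.
  have a0sh2 : alpha 0 * sh s.+2 = - (sh s.+1 + alpha 0 * sh s).
    by apply/eqP; rewrite -addr_eq0 addrCA -mulrDr sh_recurrence.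
  by rewrite a0sh2; field; rewrite sh_neq0.
Qed.

Lemma lform_phi s g :
  lform c (phi s) g = alpha 0 * ((g`_s.+1)^* - sh s.+2 / sh s.+1 * (g`_s)^*).
Proof.
rewrite (lform_tridiag c_tridiag).
under eq_bigr => j _ do rewrite phi_tridiag mulrDr.
rewrite big_split /= !sum_conj_coef_delta.
by ring.
Qed.

(* For k < n the truncated subtraction k.+1 - n is 0, and sh 0 = 0. *)
Lemma coef_Xn_phi n r k :
  ('X^n * phi r)`_k = if (k <= n + r)%N then sh (k.+1 - n) / sh r.+1 else 0.
Proof.
rewrite coefXnM coef_phi leq_subLR.
case: ltnP => [lt_kn|le_nk]; last by rewrite subSn.
have /eqP -> : (k.+1 - n == 0)%N by rewrite subn_eq0.
by rewrite sh0 mul0r if_same.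
Qed.

Lemma conj_coef_Xn_phi n r k : (('X^n * phi r)`_k)^* = ('X^n * phi r)`_k.
Proof. by rewrite coef_Xn_phi; case: ifP; rewrite ?conj_sh_ratio ?conjC0. Qed.

Lemma mu_phi n r s : let q := 'X^n * phi r in
  mu alpha c n r s = q`_s - sh s.+1 / sh s.+2 * q`_s.+1.
Proof.
have alpha0_neq0 : alpha 0 != 0 by rewrite mulf_neq0 ?oppr_eq0 ?invr_eq0 ?sh_neq0.
rewrite /mu !PhiE !lform_phi !conj_coef_Xn_phi !conj_coef_phi !coef_phi.
rewrite ltnn leqnn divff ?sh_neq0 //.
by field; rewrite alpha0_neq0 !sh_neq0.
Qed.

Lemma mu_closed n r s :
  mu alpha c n r s =
    if s == (n + r)%N then 1
    else if (n <= s.+1)%N && (s < n + r)%N then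
      - (sh n * sh 1) / (sh s.+2 * sh r.+1)
    else 0.
Proof.
rewrite mu_phi !coef_Xn_phi.
case: (ltngtP s (n + r)) => [_|_|->]; rewrite ?andbT ?andbF.
- case: leqP => [le_n_s1|lt_s1_n].
    have [k ->] : exists k, s.+1 = (k + n)%N by exists (s.+1 - n)%N; rewrite subnK.
    by rewrite -addSn !addnK mulrA -mulrBl sh_cross_ratio invfM mulrA.
  have /eqP -> : (s.+2 - n == 0)%N by rewrite subn_eq0.
  have /eqP -> : (s.+1 - n == 0)%N by rewrite subn_eq0 ltnW.
  by rewrite sh0 !mul0r mulr0 subr0.
- by rewrite mulr0 subr0.
- by rewrite mulr0 subr0 -addnS addKn divff ?sh_neq0.
Qed.

End ExplicitSolution.

Lemma inv_add_sqrtC_gt1 (C : numClosedFieldType) (a : C) :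
  0 < a -> a < 1 -> 1 < a^-1 + sqrtC (a ^- 2 - 1).
Proof.
move=> a_gt0 a_lt1; have inva_gt1 : 1 < a^-1 by rewrite invf_gt1.
rewrite ltr_wpDr // sqrtC_ge0 subr_ge0 -exprVn.
exact: exprn_ege1 (ltW inva_gt1).
Qed.

Theorem proposition4p11 (C : numClosedFieldType) (a : C) (c : int -> C) :
  0 < a -> a < 1 ->
  let u := a^-1 + sqrtC (a ^- 2 - 1) in
  let alpha := fun n : nat => - (u - u^-1) / (u ^+ n.+2 - u ^- n.+2) in
  is_OPUC_functional alpha c ->
  forall n r s : nat,
    mu alpha c n r s =
      if s == (n + r)%N then 1
      else if (n <= s.+1)%N && (s < n + r)%N then
        - ((u ^+ n - u ^- n) * (u - u^-1))
          / ((u ^+ s.+2 - u ^- s.+2) * (u ^+ r.+1 - u ^- r.+1))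
      else 0.
Proof.
move=> a_gt0 a_lt1 u alpha c_OPUC n r s.
apply: mu_closed c_OPUC n r s.
exact: inv_add_sqrtC_gt1.
Qed.
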